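(* Let $G=(V,E,\gamma,c)$ be a typed DAG task executed on a platform with $M_s\ge 1$ cores of each type $s\in S$ under a work-conserving scheduling algorithm. Let $\pi=(\tau_1,\dots,\tau_k)$ be a critical path of an arbitrary execution sequence of $G$, with finish times $f(\cdot)$. Set $f(\tau_0):=0$, and for $1\le i\le k$ let $I_i=f(\tau_i)-f(\tau_{i-1})$, let $x_i$ be the total length of the time within $[f(\tau_{i-1}),f(\tau_i))$ during which $\tau_i$ is executing, and let $y_i=I_i-x_i$ be the total length of the time within that interval during which $\tau_i$ is not executing. For $s\in S$ let $\mathcal{X}_s=\sum_{i:\gamma(\tau_i)=s}x_i$ and $\mathcal{Y}_s=\sum_{i:\gamma(\tau_i)=s}y_i$. Then for every $s\in S$: \[ \mathcal{X}_s\le \sum_{j:\,\gamma(\tau_j)=s} c(\tau_j),\qquad \mathcal{Y}_s\le \frac{1}{M_s}\Big(vol_s(G)-\sum_{j:\,\gamma(\tau_j)=s} c(\tau_j)\Big). \]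
   Context: A typed DAG task is $G=(V,E,\gamma,c)$ where $(V,E)$ is a finite directed acyclic graph with a unique source vertex $v_{src}$ (no predecessors) and a unique sink vertex $v_{snk}$ (no successors), $S$ is a finite set of core types, $\gamma:V\to S$ gives the type of each vertex, and $c:V\to\mathbb{R}_{\ge 0}$ gives the worst-case execution time (WCET) of each vertex. The platform has, for each $s\in S$, $M_s\ge1$ cores of type $s$. For $u\in V$, $\mathrm{pre}(u)$ denotes its set of (immediate) predecessors. A complete path is a path of $G$ from $v_{src}$ to $v_{snk}$. $vol_s(G)=\sum_{u\in V,\gamma(u)=s}c(u)$. Runtime model: a vertex becomes eligible when all its predecessors have finished (the source is eligible at time $0$); a vertex $v$ may only execute on cores of type $\gamma(v)$, one core at a time, for a total execution time of at most $c(v)$ (possibly less), and it finishes when its execution is complete. Scheduling is work-conserving: an eligible unfinished vertex of type $s$ must be executing whenever some core of type $s$ is available (i.e., if such a vertex is not executing, all $M_s$ cores of type $s$ are busy). An execution sequence is any resulting trace of which vertex executes when; $f(v)$ denotes the finish time of $v$ in it. A critical path of an execution sequence is a complete path $\pi=(\tau_1,\dots,\tau_k)$ such that for every $2\le i\le k$, $f(\tau_{i-1})=\max_{u\in\mathrm{pre}(\tau_i)}f(u)$. *)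

From HB Require Import structures.
From mathcomp Require Import all_boot all_order all_algebra.
From mathcomp Require Import reals.
Set Implicit Arguments. Unset Strict Implicit. Unset Printing Implicit Defensive.
Import Order.TTheory GRing.Theory Num.Theory.
Local Open Scope ring_scope.

Definition is_dag (V : finType) (E : rel V) : Prop :=
  forall x y, E x y -> ~~ connect E y x.

Definition no_pred (V : finType) (E : rel V) (v : V) : Prop := forall u, ~~ E u v.
Definition no_succ (V : finType) (E : rel V) (v : V) : Prop := forall u, ~~ E v u.

Definition typed_dag (V : finType) (E : rel V) (src snk : V) : Prop :=
  [/\ is_dag E,
      no_pred E src, (forall v, no_pred E v -> v = src),
      no_succ E snk & (forall v, no_succ E v -> v = snk)].

Definition vol (R : realType) (V S : finType) (gamma : V -> S) (c : V -> R) (s : S) : R :=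
  \sum_(u : V | gamma u == s) c u.

(* A trace is a finite list of segments (d_j, A_j): starting at time 0, the
   segments occupy consecutive intervals [T_j, T_j + d_j) with d_j > 0, and
   throughout segment j exactly the vertices of A_j are executing (each on
   its own core). *)
Definition trace (R : realType) (V : finType) := seq (R * {set V})%type.

Definition dur (R : realType) (V : finType) (sch : trace R V) (j : nat) : R :=
  (nth (0, set0) sch j).1.
Definition act (R : realType) (V : finType) (sch : trace R V) (j : nat) : {set V} :=
  (nth (0, set0) sch j).2.
Definition start (R : realType) (V : finType) (sch : trace R V) (j : nat) : R :=
  \sum_(0 <= i < j) dur sch i.

Definition executes (R : realType) (V : finType) (sch : trace R V) (v : V) (t : R) : bool :=
  has (fun j => (start sch j <= t < start sch j + dur sch j) && (v \in act sch j))
      (iota 0 (size sch)).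

Definition overlap (R : realType) (a b c d : R) : R :=
  Num.max 0 (Num.min b d - Num.max a c).

Definition exec_within (R : realType) (V : finType) (sch : trace R V) (v : V) (a b : R) : R :=
  \sum_(j < size sch | v \in act sch j)
     overlap (start sch j) (start sch j + dur sch j) a b.

Definition exec_total (R : realType) (V : finType) (sch : trace R V) (v : V) : R :=
  \sum_(j < size sch | v \in act sch j) dur sch j.

Definition ready (R : realType) (V : finType) (E : rel V) (f : V -> R) (v : V) : R :=
  \big[Num.max/0]_(u : V | E u v) f u.

Definition execution_sequence (R : realType) (V S : finType) (E : rel V)
    (gamma : V -> S) (c : V -> R) (M : S -> nat) (sch : trace R V) (f : V -> R) : Prop :=
  [/\
      (forall j, (j < size sch)%N -> 0 < dur sch j) /\
      (forall j s, (j < size sch)%N -> (#|[set v in act sch j | gamma v == s]| <= M s)%N),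
      (forall j v, (j < size sch)%N -> v \in act sch j ->
          ready E f v <= start sch j /\ start sch j + dur sch j <= f v),
      (forall v, exec_total sch v <= c v),
      (forall v, (exec_total sch v = 0 -> f v = ready E f v) /\
                 (exec_total sch v != 0 ->
                    (exists2 j, (j < size sch)%N & v \in act sch j /\ f v = start sch j + dur sch j)))
    &
      (forall v t, ready E f v <= t -> t < f v -> ~~ executes sch v t ->
          #|[set u | executes sch u t & gamma u == gamma v]| = M (gamma v))].

(* critical path (tau_1,...,tau_k) = p, given as a list; tau_i = nth src p (i-1) *)
Definition critical_path (R : realType) (V : finType) (E : rel V) (src snk : V)
    (f : V -> R) (p : seq V) : Prop :=
  match p with
  | [::] => False
  | t :: q => [/\ t = src, last t q = snk, path E t q &
       forall i, (0 < i < size p)%N -> f (nth src p i.-1) = ready E f (nth src p i)]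
  end.

(* quantities of the lemma; index i (0-based) stands for tau_{i+1} *)
Definition tau (V : finType) (src : V) (p : seq V) (i : nat) : V := nth src p i.
Definition lo (R : realType) (V : finType) (src : V) (p : seq V) (f : V -> R) (i : nat) : R :=
  if i is j.+1 then f (tau src p j) else 0.
Definition x_i (R : realType) (V : finType) (src : V) (p : seq V) (f : V -> R)
    (sch : trace R V) (i : nat) : R :=
  exec_within sch (tau src p i) (lo src p f i) (f (tau src p i)).
Definition y_i (R : realType) (V : finType) (src : V) (p : seq V) (f : V -> R)
    (sch : trace R V) (i : nat) : R :=
  (f (tau src p i) - lo src p f i) - x_i src p f sch i.

From Pilot Require Import Defs.
From HB Require Import structures.
From mathcomp Require Import all_boot all_order all_algebra.
From mathcomp Require Import reals lra.
Set Implicit Arguments. Unset Strict Implicit. Unset Printing Implicit Defensive.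
Import Order.TTheory GRing.Theory Num.Theory.
Local Open Scope ring_scope.

(* On [f(tau_(i-1)), f(tau_i)) the vertex tau_i is eligible (the critical-path condition makes
   f(tau_(i-1)) its ready time) and unfinished, so whenever it does not execute, work
   conservation keeps all M_s cores of its type busy.  None of them runs another path vertex:
   earlier ones have finished and later ones are not yet eligible.  Hence M_s * Y_s is at most
   the execution time of the type-s vertices off the path, which is at most vol_s(G) minus the
   WCETs of the type-s path vertices (the path is simple because G is acyclic).  The bound on
   X_s holds because x_i never exceeds the execution time of tau_i. *)

Section Overlap.
Variable R : realType.
Implicit Types (a b x y z : R) (g : nat -> R).

Lemma le_chain_prefix g n : (forall i, (i < n)%N -> g i <= g i.+1) ->
  forall i j, (i <= j <= n)%N -> g i <= g j.
Proof.
move=> gS i j /andP[ij jn].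
have homo_g : {in [pred i | i <= n]%N &, {homo g : i j / (i <= j)%N >-> i <= j}}.
  apply: homo_leq_in => [//|x y z|i' j' _ jn' k /andP[_ /ltnW kj]|i' _ /gS //].
  - exact: le_trans.
  - exact: leq_trans kj jn'.
exact: homo_g (leq_trans ij jn) jn ij.
Qed.

Ltac max0_cases :=
  repeat match goal with |- context[Num.max 0 ?e] => case: (leP 0 e) => ? end.

Ltac overlap_cases x y a b :=
  rewrite /overlap; case: (leP y b) => ?; case: (leP x a) => ?; max0_cases.

Lemma overlap_ge0 x y a b : 0 <= overlap x y a b.
Proof. by rewrite /overlap le_max lexx. Qed.

Lemma overlapC x y a b : overlap x y a b = overlap a b x y.
Proof. by rewrite /overlap (minC b y) (maxC a x). Qed.

Lemma overlap_le x y a b : x <= y -> overlap x y a b <= y - x.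
Proof. by move=> xy; overlap_cases x y a b; lra. Qed.

Lemma overlap_inner x y a b : x <= a -> a <= b -> b <= y -> overlap x y a b = b - a.
Proof. by move=> xa ab b_y; overlap_cases x y a b; lra. Qed.

Lemma overlap_cat x y z a b : x <= y -> y <= z ->
  overlap x y a b + overlap y z a b = overlap x z a b.
Proof.
move=> xy yz; rewrite /overlap.
case: (leP y b) => ?; case: (leP x a) => ?; case: (leP z b) => ?; case: (leP y a) => ?;
max0_cases; lra.
Qed.

Lemma overlap_telescope g n a b : (forall i, (i < n)%N -> g i <= g i.+1) ->
  \sum_(i < n) overlap (g i) (g i.+1) a b = overlap (g 0%N) (g n) a b.
Proof.
elim: n => [|n IHn] gS; first by rewrite big_ord0; overlap_cases (g 0%N) (g 0%N) a b; lra.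
rewrite big_ord_recr /= IHn => [|i /ltnW]; last exact: gS.
apply: overlap_cat; last exact: gS.
by apply: (le_chain_prefix gS); rewrite leqnSn.
Qed.

Lemma overlap_gt0P x y a b : 0 < overlap x y a b ->
  exists t, [/\ x <= t < y & a <= t < b].
Proof.
move=> ov_gt0; exists (Num.max x a); rewrite !le_max !lexx orbT /=.
by move: ov_gt0; overlap_cases x y a b => *; split; lra.
Qed.

End Overlap.

Definition seg_overlap (R : realType) (V : finType) (sch : trace R V) (j : nat) (a b : R) : R :=
  overlap (start sch j) (start sch j + dur sch j) a b.

Definition idle_within (R : realType) (V : finType) (sch : trace R V) (v : V) (a b : R) : R :=
  \sum_(j < size sch | v \notin act sch j) seg_overlap sch j a b.

Section Trace.
Variables (R : realType) (V : finType) (sch : trace R V).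
Hypothesis dur_gt0 : forall j, (j < size sch)%N -> 0 < dur sch j.
Local Notation horizon := (start sch (size sch)).
Local Notation in_seg j t := (start sch j <= t < start sch j + dur sch j).

Lemma start_succ j : start sch j.+1 = start sch j + dur sch j.
Proof. by rewrite /start big_nat_recr. Qed.

Lemma start_le i j : (i <= j <= size sch)%N -> start sch i <= start sch j.
Proof. by apply: le_chain_prefix => k /dur_gt0 dk; rewrite start_succ lerDl ltW. Qed.

Lemma start_ge0 j : (j <= size sch)%N -> 0 <= start sch j.
Proof.
have -> : 0 = start sch 0 by rewrite /start big_geq.
by move=> jn; apply: start_le.
Qed.

Lemma in_seg_inj j k t : (j < size sch)%N -> (k < size sch)%N ->
  in_seg j t -> in_seg k t -> j = k.
Proof.
wlog jk : j k / (j <= k)%N => [hwlog jn kn tj tk|jn kn /andP[_ tj] /andP[kt _]].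
  by case: (leqP j k) => [|/ltnW] jk; [|apply/esym]; apply: hwlog.
case: ltngtP jk => // jk _; suff : start sch j + dur sch j <= t by rewrite leNgt tj.
by rewrite -start_succ; apply: (le_trans _ kt); apply: start_le; rewrite jk ltnW.
Qed.

Lemma executes_seg v t j : (j < size sch)%N -> in_seg j t ->
  executes sch v t = (v \in act sch j).
Proof.
move=> jn tj; apply/hasP/idP => [[k]|vj]; last by exists j; rewrite ?mem_iota ?tj.
by rewrite mem_iota => /andP[_ kn] /andP[tk vk]; rewrite (in_seg_inj jn kn tj tk).
Qed.

Lemma executes_after_horizon v t : horizon <= t -> ~~ executes sch v t.
Proof.
move=> ht; apply/hasP => [[k]]; rewrite mem_iota add0n => /andP[_ kn] /andP[/andP[_ tk] _].
suff : start sch k + dur sch k <= t by rewrite leNgt tk.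
by rewrite -start_succ; apply: (le_trans _ ht); apply: start_le; rewrite kn leqnn.
Qed.

Lemma seg_overlap_le_dur j a b : (j < size sch)%N -> seg_overlap sch j a b <= dur sch j.
Proof.
move=> jn; rewrite /seg_overlap (le_trans (overlap_le _ _ _)) //.
  by rewrite lerDl ltW ?dur_gt0.
by rewrite addrC addKr.
Qed.

Lemma sum_seg_overlap a b : 0 <= a -> a <= b -> b <= horizon ->
  \sum_(j < size sch) seg_overlap sch j a b = b - a.
Proof.
move=> a_ge0 ab b_le; rewrite /seg_overlap.
under eq_bigr => j _ do rewrite -start_succ.
rewrite overlap_telescope => [|j /dur_gt0 dj]; last by rewrite start_succ lerDl ltW.
by rewrite overlap_inner // /start big_geq.
Qed.

Lemma exec_within_le_total v a b : exec_within sch v a b <= exec_total sch v.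
Proof. by apply: ler_sum => j _; apply: seg_overlap_le_dur. Qed.

Lemma exec_idle_within v a b : 0 <= a -> a <= b -> b <= horizon ->
  exec_within sch v a b + idle_within sch v a b = b - a.
Proof.
by move=> *; rewrite -sum_seg_overlap // (bigID (fun j : 'I_(size sch) => v \in act sch j)).
Qed.

End Trace.

Lemma ready_no_pred (R : realType) (V : finType) (E : rel V) (f : V -> R) v :
  no_pred E v -> ready E f v = 0.
Proof. by move=> v_src; rewrite /ready big_pred0 // => u; apply/negbTE/v_src. Qed.

Lemma dag_path_uniq (V : finType) (E : rel V) x p : is_dag E -> path E x p -> uniq (x :: p).
Proof.
move=> dag; elim: p x => [|y p IHp] x //= /andP[xy yp].
have /= -> := IHp y yp; rewrite andbT; apply/negP => /(path_connect yp) yx.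
by move: (dag _ _ xy); rewrite yx.
Qed.

Lemma vol_sub_seq (R : realType) (V S : finType) (gamma : V -> S) (c : V -> R) s x0 (p : seq V) :
  uniq p ->
  vol gamma c s - \sum_(i < size p | gamma (nth x0 p i) == s) c (nth x0 p i)
    = \sum_(u | (gamma u == s) && (u \notin p)) c u.
Proof.
move=> p_uniq.
rewrite -(big_mkord (fun i => gamma (nth x0 p i) == s) (fun i => c (nth x0 p i))).
rewrite -(big_nth x0 (fun u => gamma u == s) c) big_mkcond big_uniq // -big_mkcondr.
rewrite /vol (bigID (mem p)) /= addrC (eq_bigl _ _ (fun u => andbC (u \in p) _)).
by rewrite addrK.
Qed.

Section ExecutionSequence.
Variables (R : realType) (V S : finType) (E : rel V) (gamma : V -> S) (c : V -> R)
  (M : S -> nat) (sch : trace R V) (f : V -> R).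
Hypothesis exec_seq : execution_sequence E gamma c M sch f.
Local Notation horizon := (start sch (size sch)).

Lemma exec_dur_gt0 j : (j < size sch)%N -> 0 < dur sch j.
Proof. by case: exec_seq => -[dur_gt0 _] *; apply: dur_gt0. Qed.

Lemma ready_le_finish v : ready E f v <= f v.
Proof.
case: exec_seq => _ eligible _ finish _; case: (finish v) => idle_f busy_f.
have [/idle_f -> //|/busy_f [j jn [vj ->]]] := eqVneq (exec_total sch v) 0.
have [ready_le _] := eligible _ _ jn vj.
by rewrite (le_trans ready_le) // lerDl ltW ?exec_dur_gt0.
Qed.

Lemma busy_cores v j t : (j < size sch)%N ->
  start sch j <= t < start sch j + dur sch j -> ready E f v <= t -> t < f v ->
  v \notin act sch j -> #|[set u in act sch j | gamma u == gamma v]| = M (gamma v).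
Proof.
case: exec_seq => _ _ _ _ work_conserving jn tj vt tv vj.
have exec_j u : executes sch u t = (u \in act sch j) := executes_seg exec_dur_gt0 u jn tj.
rewrite -(work_conserving v t) ?exec_j //.
by apply: eq_card => u; rewrite !inE exec_j.
Qed.

(* At the horizon no core is busy, so work conservation leaves no eligible vertex pending. *)
Lemma finish_le_horizon v : (0 < M (gamma v))%N ->
  ready E f v <= horizon -> f v <= horizon.
Proof.
case: exec_seq => _ _ _ _ work_conserving M_gt0 v_ready; rewrite leNgt; apply/negP => v_late.
have idle u := executes_after_horizon exec_dur_gt0 u (lexx horizon).
move: M_gt0; rewrite -(work_conserving v horizon) ?idle //.
suff -> : [set u | executes sch u horizon & gamma u == gamma v] = set0 by rewrite cards0.
by apply/setP => u; rewrite !inE (negbTE (idle u)).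
Qed.

End ExecutionSequence.

Section CriticalPath.
Variables (R : realType) (V S : finType) (E : rel V) (src snk : V) (gamma : V -> S)
  (c : V -> R) (M : S -> nat) (sch : trace R V) (f : V -> R) (p : seq V).
Hypothesis dag : is_dag E.
Hypothesis src_no_pred : no_pred E src.
Hypothesis M_gt0 : forall s, (0 < M s)%N.
Hypothesis exec_seq : execution_sequence E gamma c M sch f.
Hypothesis crit : critical_path E src snk f p.
Local Notation lo := (lo src p f).
Local Notation tau := (tau src p).
Local Notation horizon := (start sch (size sch)).
Local Notation ov i j := (seg_overlap sch j (lo i) (lo i.+1)).
Local Notation dur_gt0 := (exec_dur_gt0 exec_seq).

Lemma critical_path_uniq : uniq p.
Proof. by case: p crit => [|x q] //= [_ _ xq _]; apply: dag_path_uniq xq. Qed.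

Lemma lo_ready i : (i < size p)%N -> lo i = ready E f (tau i).
Proof.
rewrite /Defs.lo /tau; case: p crit => [|x q] //= [-> _ _ crit_step].
by case: i => [_|i ilt]; [rewrite ready_no_pred | rewrite -(crit_step i.+1)].
Qed.

Lemma lo_le i j : (i <= j <= size p)%N -> lo i <= lo j.
Proof. by apply: le_chain_prefix => k klt; rewrite lo_ready // (ready_le_finish exec_seq). Qed.

Lemma lo_ge0 i : (i <= size p)%N -> 0 <= lo i.
Proof. by move=> ilt; apply: (@lo_le 0). Qed.

Lemma lo_le_horizon i : (i <= size p)%N -> lo i <= horizon.
Proof.
elim: i => [_|i IHi ilt]; first exact: (start_ge0 dur_gt0 (leqnn _)).
by apply: (finish_le_horizon exec_seq (M_gt0 _)); rewrite -lo_ready // IHi // ltnW.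
Qed.

Lemma y_i_idle i : (i < size p)%N ->
  y_i src p f sch i = idle_within sch (tau i) (lo i) (lo i.+1).
Proof.
move=> ilt; rewrite /y_i -(exec_idle_within dur_gt0 (tau i) (lo_ge0 (ltnW ilt))).
- by rewrite addrC addKr.
- by apply: (@lo_le i i.+1); rewrite leqnSn.
- exact: (@lo_le_horizon i.+1).
Qed.

Lemma executing_path_vertex i j t u : (i < size p)%N -> (j < size sch)%N ->
  start sch j <= t < start sch j + dur sch j -> lo i <= t < lo i.+1 ->
  u \in p -> u \in act sch j -> u = tau i.
Proof.
move=> ilt jn /andP[jt tj] /andP[it ti] up uj.
have [u_ready u_finish] : ready E f u <= start sch j /\ start sch j + dur sch j <= f u.
  by case: exec_seq => _ eligible _ _ _; apply: eligible.
have um : (index u p < size p)%N by rewrite index_mem.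
have u_tau : u = tau (index u p) by rewrite /tau nth_index.
case: (ltngtP (index u p) i) => [mi|im|<- //].
- have fu_lo : f u <= lo i.
    by rewrite u_tau; apply: (@lo_le (index u p).+1); rewrite mi ltnW.
  by have := lt_le_trans (le_lt_trans (le_trans fu_lo it) tj) u_finish; rewrite ltxx.
- have lo_ready_u : lo i.+1 <= ready E f u.
    by rewrite u_tau -lo_ready //; apply: lo_le; rewrite im ltnW.
  by have := lt_le_trans ti (le_trans lo_ready_u (le_trans u_ready jt)); rewrite ltxx.
Qed.

Lemma busy_cores_off_path i j : (i < size p)%N -> (j < size sch)%N ->
  tau i \notin act sch j -> 0 < ov i j ->
  (M (gamma (tau i)) <= #|[set u in act sch j | (gamma u == gamma (tau i)) && (u \notin p)]|)%N.
Proof.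
move=> ilt jn ij /overlap_gt0P [t [tj /andP[it ti]]].
rewrite -(busy_cores exec_seq jn tj _ ti ij); last by rewrite -lo_ready.
apply: subset_leq_card; apply/subsetP => u; rewrite !inE => /andP[uj ->]; rewrite uj /=.
by apply: contraNN ij => up; rewrite -(executing_path_vertex ilt jn tj _ up uj) ?it.
Qed.

Lemma sum_path_overlap_le_dur j : (j < size sch)%N -> \sum_(i < size p) ov i j <= dur sch j.
Proof.
move=> jn; under eq_bigr => i _ do rewrite /seg_overlap overlapC.
rewrite overlap_telescope => [|i ilt]; last by apply: lo_le; rewrite leqnSn ilt.
by rewrite overlapC; apply: seg_overlap_le_dur dur_gt0 _ _ _ jn.
Qed.

Lemma scaled_seg_idle_le_off_path i j : (i < size p)%N -> (j < size sch)%N ->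
  tau i \notin act sch j ->
  (M (gamma (tau i)))%:R * ov i j
    <= \sum_(u | (gamma u == gamma (tau i)) && (u \notin p)) (u \in act sch j)%:R * ov i j.
Proof.
move=> ilt jn ij.
have [ov0|ov_ne0] := eqVneq (ov i j) 0; first by rewrite ov0 mulr0 big1 // => u _; rewrite mulr0.
rewrite -mulr_suml ler_wpM2r ?overlap_ge0 // -natr_sum ler_nat.
apply: leq_trans (busy_cores_off_path ilt jn ij _) _; first by rewrite lt_def ov_ne0 overlap_ge0.
rewrite -sum1_card big_mkcond [X in (_ <= X)%N]big_mkcond /=.
by apply/eq_leq/eq_bigr => u _; rewrite !inE; case: (u \in act sch j); case: ifP.
Qed.

Lemma scaled_y_i_le_off_path i : (i < size p)%N ->
  (M (gamma (tau i)))%:R * y_i src p f sch i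
    <= \sum_(j < size sch)
         \sum_(u | (gamma u == gamma (tau i)) && (u \notin p)) (u \in act sch j)%:R * ov i j.
Proof.
move=> ilt; rewrite y_i_idle // mulr_sumr.
rewrite [X in _ <= X](bigID (fun j : 'I_(size sch) => tau i \notin act sch j)) /=.
rewrite -[X in X <= _]addr0 lerD //.
  by apply: ler_sum => j; apply: scaled_seg_idle_le_off_path.
by apply: sumr_ge0 => j _; apply: sumr_ge0 => u _; rewrite mulr_ge0 ?ler0n ?overlap_ge0.
Qed.

Lemma scaled_sum_y_i_le_off_path_exec s :
  (M s)%:R * \sum_(i < size p | gamma (tau i) == s) y_i src p f sch i
    <= \sum_(u | (gamma u == s) && (u \notin p)) exec_total sch u.
Proof.
rewrite mulr_sumr; apply: (@le_trans _ _ (\sum_(i < size p | gamma (tau i) == s)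
    \sum_(j < size sch) \sum_(u | (gamma u == s) && (u \notin p)) (u \in act sch j)%:R * ov i j)).
  by apply: ler_sum => i /eqP <-; apply: scaled_y_i_le_off_path.
under eq_bigr => i _ do rewrite exchange_big /=.
rewrite exchange_big /=; apply: ler_sum => u _; rewrite exchange_big /=.
rewrite /exec_total [X in _ <= X]big_mkcond /=; apply: ler_sum => j _; rewrite -mulr_sumr.
case: (u \in act sch j); rewrite ?mul1r ?mul0r //.
apply: le_trans (sum_path_overlap_le_dur (ltn_ord j)).
rewrite [X in _ <= X](bigID (fun i : 'I_(size p) => gamma (tau i) == s)) /= lerDl.
by apply: sumr_ge0 => i _; apply: overlap_ge0.
Qed.

End CriticalPath.

Theorem lemma1 (R : realType) (V S : finType) (E : rel V) (src snk : V)
    (gamma : V -> S) (c : V -> R) (M : S -> nat)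
    (sch : trace R V) (f : V -> R) (p : seq V) :
  typed_dag E src snk ->
  (forall v, 0 <= c v) ->
  (forall s, (0 < M s)%N) ->
  execution_sequence E gamma c M sch f ->
  critical_path E src snk f p ->
  forall s : S,
    \sum_(i < size p | gamma (tau src p i) == s) x_i src p f sch i
      <= \sum_(i < size p | gamma (tau src p i) == s) c (tau src p i)
    /\
    \sum_(i < size p | gamma (tau src p i) == s) y_i src p f sch i
      <= (M s)%:R^-1 * (vol gamma c s
                        - \sum_(i < size p | gamma (tau src p i) == s) c (tau src p i)).
Proof.
move=> [dag src_no_pred _ _ _] _ M_gt0 exec_seq crit s.
have exec_le_wcet : forall v, exec_total sch v <= c v by case: exec_seq.
split.
  apply: ler_sum => i _; apply: le_trans (exec_le_wcet _).
  exact: exec_within_le_total (exec_dur_gt0 exec_seq) _ _ _.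
rewrite vol_sub_seq ?(critical_path_uniq dag crit) // ler_pdivlMl ?ltr0n //.
apply: (le_trans (scaled_sum_y_i_le_off_path_exec src_no_pred M_gt0 exec_seq crit s)).
by apply: ler_sum => u _; apply: exec_le_wcet.
Qed.
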